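(* Let $T$ be the regular rooted tree of valence $p\geq 2$ (geometric realization, usual topology), equipped with the embedded wire diffeology $\mathcal{D}_T$. Then every $g\in\operatorname{Aut}T$, viewed as a map $g:T\to T$, is smooth with respect to $\mathcal{D}_T$.
   Context: Fix a finite alphabet $A$ with $|A|=p\geq 2$. The vertices of $T$ are the finite words over $A$ (the root is the empty word); the length $|u|$ of a word is its level; two vertices are joined by an edge iff they have the form $a_1\dots a_n$ and $a_1\dots a_na_{n+1}$. As a topological space, $T$ is the 1-dimensional CW complex obtained by realizing each edge as a copy of $[0,1]$, with its usual topology. $\operatorname{Aut}T$ is the group of bijections of the vertex set fixing the root and preserving adjacency; each such automorphism is regarded as a homeomorphism of the geometric realization, mapping each edge affinely onto its image edge. A diffeology on a set $X$ is a collection of maps $U\to X$ (''plots''), $U$ ranging over open subsets of all $\mathbb{R}^n$, containing all constant maps, closed under precomposition with smooth maps, and satisfying the sheaf condition (a map that is locally a plot is a plot). The diffeology generated by a set $\mathcal{A}$ of maps is the smallest diffeology containing $\mathcal{A}$. The embedded wire diffeology $\mathcal{D}_T$ is the diffeology on $T$ generated by all maps $\gamma:\mathbb{R}\to T$ that are injective, continuous, and homeomorphisms onto their images. A map $f:X\to Y$ of diffeological spaces is smooth if $f\circ P$ is a plot of $Y$ for every plot $P$ of $X$. *)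

From HB Require Import structures.
From mathcomp Require Import all_boot all_order all_algebra.
From mathcomp Require Import all_classical all_reals all_analysis.
Set Implicit Arguments. Unset Strict Implicit. Unset Printing Implicit Defensive.
Import Order.TTheory GRing.Theory Num.Theory.
Import numFieldNormedType.Exports.
Local Open Scope classical_set_scope.
Local Open Scope ring_scope.

Fixpoint Ck_on (R : realType) (m n : nat) (V : set 'rV[R]_m) (k : nat)
    (f : 'rV[R]_m -> 'rV[R]_n) : Prop :=
  match k with
  | 0%N => forall x, V x -> {for x, continuous f}
  | k'.+1 => (forall x, V x -> differentiable f x) /\
             (forall v : 'rV[R]_m, Ck_on V k' ('D_v f))
  end.

Definition smooth_on (R : realType) (m n : nat) (V : set 'rV[R]_m)
    (f : 'rV[R]_m -> 'rV[R]_n) : Prop :=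
  forall k, Ck_on V k f.

(* A parametrization of X is a map U -> X with U open in some R^n; we
   represent it by (n, U, P) with P : 'rV_n -> X total, only its values
   on U being relevant (hence the extensionality axiom below). *)
Definition param_pred (R : realType) (X : Type) :=
  forall n : nat, set 'rV[R]_n -> ('rV[R]_n -> X) -> Prop.

Definition is_diffeology (R : realType) (X : Type) (D : param_pred R X) : Prop :=
  [/\
      (forall n (U : set 'rV[R]_n) (P Q : 'rV[R]_n -> X),
          open U -> D n U P -> (forall x, U x -> P x = Q x) -> D n U Q),
      (forall n (U : set 'rV[R]_n) (x : X), open U -> D n U (fun _ => x)),
      (forall n (U : set 'rV[R]_n) (P : 'rV[R]_n -> X),
          open U -> D n U P ->
          forall m (V : set 'rV[R]_m) (F : 'rV[R]_m -> 'rV[R]_n),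
            open V -> smooth_on V F -> (forall y, V y -> U (F y)) ->
            D m V (P \o F)) &
      (forall n (U : set 'rV[R]_n) (P : 'rV[R]_n -> X),
          open U ->
          (forall x, U x -> exists W : set 'rV[R]_n,
                [/\ open W, W x, W `<=` U & D n W P]) ->
          D n U P)].

Definition generated_plot (R : realType) (X : Type) (G : param_pred R X) :
  param_pred R X :=
  fun n U P => open U /\
    forall D : param_pred R X, is_diffeology D ->
      (forall k (V : set 'rV[R]_k) Q, open V -> G k V Q -> D k V Q) ->
      D n U P.

Definition dsmooth (R : realType) (X Y : Type) (DX : param_pred R X)
    (DY : param_pred R Y) (f : X -> Y) : Prop :=
  forall n (U : set 'rV[R]_n) (P : 'rV[R]_n -> X), DX n U P -> DY n U (f \o P).

(* Alphabet A = 'I_p; vertices are words (seq 'I_p); root = [::]. *)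
Definition word (p : nat) := seq 'I_p.

Definition parent (p : nat) (w : word p) : word p := take (size w).-1 w.

Definition tadj (p : nat) (u v : word p) : bool :=
  [exists a : 'I_p, (v == rcons u a) || (u == rcons v a)].

(* A point is encoded as a pair (w, t):
   either (root, 0), or (w, t) with w a nonempty word and 0 < t <= 1, meaning
   the point of the edge [parent w, w] at parameter t measured from parent w
   (t = 1 is the vertex w). *)
Definition tree_pt_pred (p : nat) (R : realType) (x : word p * R) : bool :=
  ((x.1 == [::]) && (x.2 == 0)) || ((x.1 != [::]) && (0 < x.2 <= 1)).

Definition tree (p : nat) (R : realType) :=
  {x : word p * R | tree_pt_pred x}.

Lemma troot_proof (p : nat) (R : realType) :
  tree_pt_pred ([::] : word p, 0 : R).
Proof. by rewrite /tree_pt_pred /= !eqxx. Qed.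

Definition troot (p : nat) (R : realType) : tree p R :=
  exist _ ([::], 0) (troot_proof p R).

Definition mkpt (p : nat) (R : realType) (x : word p * R) : tree p R :=
  match boolP (tree_pt_pred x) with
  | AltTrue h => exist _ x h
  | AltFalse _ => troot p R
  end.

Definition vertex (p : nat) (R : realType) (u : word p) : tree p R :=
  if u == [::] then troot p R else mkpt (u, 1 : R).

Definition edge_pt (p : nat) (R : realType) (w : word p) (s : R) : tree p R :=
  if s == 0 then @vertex p R (parent w) else mkpt (w, s).

(* The CW (weak) topology: U is open iff its preimage under each
   characteristic map of an edge [0,1] -> T is open in [0,1]. *)
Definition tree_open (p : nat) (R : realType) (U : set (tree p R)) : Prop :=
  forall w : word p, w != [::] ->
    exists V : set R, open V /\
      forall s : R, 0 <= s <= 1 -> (U (@edge_pt p R w s) <-> V s).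

(* embedded wires: injective continuous maps R -> T that are homeomorphisms
   onto their images (with the subspace topology) *)
Definition embedded_wire (p : nat) (R : realType) (g : R -> tree p R) : Prop :=
  [/\ injective g,
      (forall U : set (tree p R), tree_open U -> open (g @^-1` U)) &
      (forall V : set R, open V ->
         exists U : set (tree p R), tree_open U /\ g @` V = range g `&` U)].

(* the generating family of the embedded wire diffeology, as parametrizations
   R = 'rV_1 -> T *)
Definition wire_gen (p : nat) (R : realType) : param_pred R (tree p R) :=
  fun n U P => exists (e : n = 1%N) (g : R -> tree p R),
    embedded_wire g /\ U = setT /\
    P = (fun x : 'rV[R]_n => g ((castmx (erefl 1%N, e) x) ord0 ord0)).

Definition wire_diffeology (p : nat) (R : realType) : param_pred R (tree p R) :=
  generated_plot (@wire_gen p R).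

Definition tree_aut (p : nat) (g : word p -> word p) : Prop :=
  [/\ bijective g, g [::] = [::] &
      forall u v, tadj u v = tadj (g u) (g v)].

Definition edge_between (p : nat) (R : realType) (x y : word p) (t : R) :
  tree p R :=
  if (y != [::]) && (parent y == x) then @edge_pt p R y t else @edge_pt p R x (1 - t).

(* the homeomorphism of the realization induced by g: vertices go to their
   images, each edge [parent w, w] is mapped affinely onto [g (parent w), g w] *)
Definition aut_act (p : nat) (R : realType) (g : word p -> word p)
    (x : tree p R) : tree p R :=
  let: (w, t) := sval x in
  if w == [::] then @vertex p R (g [::])
  else @edge_between p R (g (parent w)) (g w) t.

(* An automorphism g of the tree preserves the root and adjacency, hence the
   level of every vertex; so it maps the edge [parent w, w] onto the edge
   [parent (g w), g w], and the induced map of the realization is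
   (w, t) |-> (g w, t).  This map and the one induced by g^-1 are mutually
   inverse and pull CW-open sets back to CW-open sets, so post-composition
   with the former sends embedded wires to embedded wires.  A map sending
   the generators of a generated diffeology into it is smooth. *)
From HB Require Import structures.
From mathcomp Require Import all_boot all_order all_algebra.
From mathcomp Require Import all_classical all_reals all_analysis.
From mathcomp Require Import zify.
Set Implicit Arguments. Unset Strict Implicit. Unset Printing Implicit Defensive.
Import Order.TTheory GRing.Theory Num.Theory.
Import numFieldNormedType.Exports.
Local Open Scope classical_set_scope.
Local Open Scope ring_scope.

Section GeneratedDiffeology.
Variables (R : realType) (X : Type) (G : param_pred R X).

Lemma generated_plot_is_diffeology : is_diffeology (generated_plot G).
Proof.
split.
- move=> n U P Q oU [_ HP] PQ; split=> // D hD hG; case: (hD) => ext _ _ _.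
  exact: ext _ _ _ _ oU (HP D hD hG) PQ.
- by move=> n U x oU; split=> // D [_ cst _ _] hG; exact: cst.
- move=> n U P oU [_ HP] m V F oV sF FVU; split=> // D hD hG.
  case: (hD) => _ _ comp _; exact: comp _ _ _ oU (HP D hD hG) _ _ _ oV sF FVU.
- move=> n U P oU loc; split=> // D hD hG; case: (hD) => _ _ _ sheaf.
  apply: (sheaf _ _ _ oU) => x Ux; have [W [oW Wx WU [_ HPW]]] := loc x Ux.
  by exists W; split => //; exact: HPW.
Qed.

Lemma generated_plot_gen n (U : set 'rV[R]_n) (P : 'rV[R]_n -> X) :
  open U -> G U P -> generated_plot G U P.
Proof. by move=> oU GP; split=> // D _ hG; exact: hG. Qed.

(* The plots P with f \o P a plot form a diffeology containing G. *)
Lemma dsmooth_generated (f : X -> X) :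
  (forall n (U : set 'rV[R]_n) P, open U -> G U P ->
     generated_plot G U (f \o P)) ->
  dsmooth (generated_plot G) (generated_plot G) f.
Proof.
move=> fG n U P [oU HP].
apply: (HP (fun n U P => generated_plot G U (f \o P))) => //.
have [ext cst comp sheaf] := generated_plot_is_diffeology.
split.
- by move=> n' U' P' Q' oU' HP' PQ; apply: (ext _ _ _ _ oU' HP') => x Ux /=; rewrite PQ.
- by move=> n' U' x oU'; exact: cst.
- by move=> n' U' P' oU' HP' m V F oV sF FVU; exact: comp _ _ _ oU' HP' _ _ _ oV sF FVU.
- by move=> n' U' P' oU' loc; exact: sheaf _ _ _ oU' loc.
Qed.

End GeneratedDiffeology.

Section TreeAutomorphism.
Variables (p : nat) (g : word p -> word p).
Hypothesis hg : tree_aut g.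

Lemma tadj_rcons (u : word p) a : tadj u (rcons u a).
Proof. by apply/existsP; exists a; rewrite eqxx. Qed.

Lemma tadjP (u v : word p) :
  tadj u v -> exists a, v = rcons u a \/ u = rcons v a.
Proof. by move/existsP=> [a /orP [/eqP|/eqP]] E; exists a; [left|right]. Qed.

Lemma parent_rcons (v : word p) a : parent (rcons v a) = v.
Proof. by rewrite /parent size_rcons /= -cats1 take_size_cat. Qed.

Lemma aut_root : g [::] = [::]. Proof. by case: hg. Qed.

Lemma aut_inj : injective g. Proof. by case: hg => /bij_inj. Qed.

Lemma aut_tadj_rcons (v : word p) a : tadj (g v) (g (rcons v a)).
Proof. by case: hg => _ _ <-; exact: tadj_rcons. Qed.

Lemma size_aut_le n (u : word p) : (size u <= n)%N -> size (g u) = size u.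
Proof.
elim: n u => [|n IH] u; first by rewrite leqn0 => /nilP ->; rewrite aut_root.
case/lastP: u => [|v a]; first by rewrite aut_root.
rewrite size_rcons ltnS => hv.
have [b [->|gvE]] := tadjP (aut_tadj_rcons v a); first by rewrite !size_rcons IH.
case/lastP: v hv gvE => [|v' c] hv gvE.
  by have := congr1 size gvE; rewrite aut_root size_rcons.
have hv' : (size v' <= n)%N by rewrite size_rcons in hv; exact: ltnW.
have [d [gvE'|gv'E]] := tadjP (aut_tadj_rcons v' c).
  have := congr1 (@parent p) (etrans (esym gvE') gvE).
  by rewrite !parent_rcons => /aut_inj/(congr1 size); rewrite !size_rcons; lia.
by have := congr1 size gv'E; rewrite size_rcons (IH _ hv) (IH _ hv') size_rcons; lia.
Qed.

Lemma size_aut (u : word p) : size (g u) = size u.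
Proof. exact: size_aut_le. Qed.

Lemma aut_rcons (v : word p) a : exists b, g (rcons v a) = rcons (g v) b.
Proof.
have [b [E|E]] := tadjP (aut_tadj_rcons v a); first by exists b.
by have := congr1 size E; rewrite size_rcons !size_aut size_rcons; lia.
Qed.

Lemma aut_eq_nil (w : word p) : (g w == [::]) = (w == [::]).
Proof. by rewrite -!size_eq0 size_aut. Qed.

Lemma aut_parent (w : word p) : w != [::] -> parent (g w) = g (parent w).
Proof.
case/lastP: w => // v a _.
by have [b ->] := aut_rcons v a; rewrite !parent_rcons.
Qed.

Lemma tree_aut_inv :
  exists g', [/\ tree_aut g', cancel g g' & cancel g' g].
Proof.
have [[g' gK g'K] g0 adj] := hg; exists g'; split=> //; split.
- by exists g.
- by rewrite -{1}g0 gK.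
- by move=> u v; rewrite -{1}(g'K u) -{1}(g'K v) -adj.
Qed.

Variable R : realType.

Lemma mkptE (x : word p * R) : tree_pt_pred x -> sval (mkpt x) = x.
Proof.
move=> hx; rewrite /mkpt; destruct (boolP (tree_pt_pred x)) as [|hN] => //.
by rewrite hx in hN.
Qed.

Lemma vertexE (u : word p) :
  sval (@vertex p R u) = if u == [::] then ([::], 0) else (u, 1).
Proof.
rewrite /vertex; case: eqP => //= /eqP hu.
by rewrite mkptE // /tree_pt_pred /= (negbTE hu) ltr01 lexx.
Qed.

Lemma aut_actE (x : tree p R) : sval (aut_act g x) = (g (sval x).1, (sval x).2).
Proof.
case: x => [[w t] /= ht]; rewrite /aut_act /=.
have [wE|wN] := eqVneq w [::].
  by move: ht; rewrite /tree_pt_pred wE /= orbF aut_root vertexE eqxx => /eqP ->.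
have t01 : 0 < t <= 1 by move: ht; rewrite /tree_pt_pred /= (negbTE wN).
rewrite /edge_between aut_eq_nil (negbTE wN) aut_parent // eqxx /= /edge_pt.
rewrite gt_eqF; last by case/andP: t01.
by rewrite mkptE // /tree_pt_pred /= aut_eq_nil (negbTE wN) t01.
Qed.

Lemma aut_act_vertex (u : word p) : aut_act g (@vertex p R u) = vertex R (g u).
Proof.
apply: val_inj => /=; rewrite aut_actE !vertexE aut_eq_nil.
by have [_|_] := eqVneq u [::]; rewrite ?aut_root.
Qed.

Lemma aut_act_edge_pt (w : word p) (s : R) : w != [::] -> 0 <= s <= 1 ->
  aut_act g (edge_pt w s) = edge_pt (g w) s.
Proof.
move=> wN /andP [s0 s1]; rewrite /edge_pt; have [_|sN] := eqVneq s 0.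
  by rewrite aut_act_vertex aut_parent.
have s_gt0 : 0 < s by rewrite lt_neqAle eq_sym sN s0.
apply: val_inj => /=; rewrite aut_actE !mkptE //.
  by rewrite /tree_pt_pred /= aut_eq_nil (negbTE wN) s_gt0 s1.
by rewrite /tree_pt_pred /= (negbTE wN) s_gt0 s1.
Qed.

Lemma tree_open_aut_act (U : set (tree p R)) :
  tree_open U -> tree_open (aut_act g @^-1` U).
Proof.
move=> oU w wN; have [V [oV UV]] := oU (g w) (negbT (etrans (aut_eq_nil w) (negbTE wN))).
by exists V; split=> // s s01; rewrite /preimage /= aut_act_edge_pt //; exact: UV.
Qed.

End TreeAutomorphism.

Lemma aut_act_can (R : realType) (p : nat) (g g' : word p -> word p) :
  tree_aut g -> tree_aut g' -> cancel g g' -> cancel (aut_act g) (@aut_act p R g').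
Proof.
by move=> hg hg' gK x; apply: val_inj => /=; rewrite !aut_actE //= gK; case: (sval x).
Qed.

Lemma embedded_wire_comp (R : realType) (p : nat) (h h' : tree p R -> tree p R)
    (c : R -> tree p R) :
  cancel h h' ->
  (forall U, tree_open U -> tree_open (h @^-1` U)) ->
  (forall U, tree_open U -> tree_open (h' @^-1` U)) ->
  embedded_wire c -> embedded_wire (h \o c).
Proof.
move=> hK h_open h'_open [c_inj c_cont c_emb]; split.
- exact: inj_comp (can_inj hK) c_inj.
- by move=> U /h_open; exact: c_cont.
- move=> V oV; have [U [oU cVE]] := c_emb V oV.
  exists (h' @^-1` U); split; first exact: h'_open.
  apply/seteqP; split=> [_ [v Vv <-]|_ [[r _ <-]]]; rewrite /preimage /= hK.
    have : (c @` V) (c v) by exists v.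
    by rewrite cVE => -[crange Uc]; split=> //; exists v.
  move=> Ucr; have : (range c `&` U) (c r) by split=> //; exists r.
  by rewrite -cVE => -[v Vv cvE]; exists v => //=; rewrite cvE.
Qed.

Theorem mainTheorem2 (R : realType) (p : nat) (hp : (2 <= p)%N)
    (g : word p -> word p) (hg : tree_aut g) :
  dsmooth (@wire_diffeology p R) (@wire_diffeology p R) (@aut_act p R g).
Proof.
have [g' [hg' gK _]] := tree_aut_inv hg.
apply: dsmooth_generated => n U P oU [e [c [wire_c [UE PE]]]].
apply: generated_plot_gen => //; exists e, (aut_act g \o c).
split; last by rewrite PE.
apply: embedded_wire_comp wire_c.
- exact: aut_act_can hg hg' gK.
- exact: tree_open_aut_act.
- exact: tree_open_aut_act.
Qed.
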